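(* Let $X_1,\dots,X_M$ be i.i.d. random variables taking values in $[k]$, let $\hat p_i=\frac1M\sum_{j=1}^M\mathbf{1}\{X_j=i\}$, and define $L(X_1,\dots,X_M)=\sum_{i=1}^k\hat p_i(1-\hat p_i)$. Then the function $L:[k]^M\to\mathbb{R}$ satisfies the bounded difference property with parameters $c_i=\frac2M$ for all $i\in[M]$, and consequently for every $t>0$, $$\mathbb{P}\left[|L(X_1,\dots,X_M)-\mathbb{E}[L(X_1,\dots,X_M)]|\ge t\right]\le 2\exp\left(-\frac{Mt^2}{2}\right).$$
   Context: A function $f:\mathcal{X}^M\to\mathbb{R}$ has the bounded difference property with parameters $c_1,\dots,c_M$ if for every $i\in[M]$, all $x_1,\dots,x_M,x_i'\in\mathcal{X}$, $|f(x_1,\dots,x_i,\dots,x_M)-f(x_1,\dots,x_i',\dots,x_M)|\le c_i$. *)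

From HB Require Import structures.
From mathcomp Require Import all_boot all_order all_algebra.
From mathcomp Require Import reals.
From mathcomp Require Import sequences.
Set Implicit Arguments. Unset Strict Implicit. Unset Printing Implicit Defensive.
Import Order.TTheory GRing.Theory Num.Theory.
Local Open Scope ring_scope.

Definition is_pmf (R : realType) (T : finType) (p : T -> R) : Prop :=
  (forall x, 0 <= p x) /\ \sum_(x : T) p x = 1.

Definition fupd (M : nat) (T : Type) (x : {ffun 'I_M -> T}) (i : 'I_M) (y : T)
  : {ffun 'I_M -> T} := [ffun j => if j == i then y else x j].

Definition bounded_difference (R : realType) (M : nat) (T : finType)
  (f : {ffun 'I_M -> T} -> R) (c : 'I_M -> R) : Prop :=
  forall (i : 'I_M) (x : {ffun 'I_M -> T}) (y : T),
    `|f x - f (fupd x i y)| <= c i.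

Definition phat (R : realType) (M k : nat) (x : {ffun 'I_M -> 'I_k}) (i : 'I_k) : R :=
  (#|[set j | x j == i]|)%:R / M%:R.

Definition Lfun (R : realType) (M k : nat) (x : {ffun 'I_M -> 'I_k}) : R :=
  \sum_(i < k) phat R x i * (1 - phat R x i).

(* Law of (X_1,...,X_M) i.i.d. with common pmf p: the product measure. *)
Definition iid_weight (R : realType) (M k : nat) (p : 'I_k -> R)
  (x : {ffun 'I_M -> 'I_k}) : R := \prod_(j < M) p (x j).

Definition iid_prob (R : realType) (M k : nat) (p : 'I_k -> R)
  (E : pred {ffun 'I_M -> 'I_k}) : R :=
  \sum_(x | E x) iid_weight p x.

Definition iid_expect (R : realType) (M k : nat) (p : 'I_k -> R)
  (f : {ffun 'I_M -> 'I_k} -> R) : R :=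
  \sum_(x : {ffun 'I_M -> 'I_k}) iid_weight p x * f x.

From HB Require Import structures.
From mathcomp Require Import all_boot all_order all_algebra.
From mathcomp Require Import reals.
From mathcomp Require Import sequences.
From mathcomp Require Import boolp classical_sets functions topology normedtype derive realfun exp.
From mathcomp Require Import ring lra.
Set Implicit Arguments. Unset Strict Implicit. Unset Printing Implicit Defensive.
Import Order.TTheory GRing.Theory Num.Theory.
Import numFieldNormedType.Exports.
Local Open Scope ring_scope.

(* The martingale method: average out the coordinates one at a time.  The
   [j]-th step changes the function by at most [c j] in the averaged coordinate,
   so by Hoeffding's lemma the conditional moment generating function grows by
   at most [exp (l^2 c_j^2 / 8)]; once every coordinate is averaged out only
   the constant [E f] is left, and a Chernoff bound on both tails concludes.
   Hoeffding's lemma reduces, by convexity of [exp], to a two-point law, whose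
   log-moment generating function has second derivative at most [1/4].
   For [L], replacing one sample moves at most two empirical frequencies, each
   by [1/M], and [q (1 - q)] is 1-Lipschitz on [0, 1]: hence [c_i = 2/M]. *)

Section DeriveMonotone.
Variable R : realType.
Implicit Types (f df : R -> R) (a b : R).

Lemma is_derive_within_continuous f df a b :
  (forall x, is_derive x (1 : R) f (df x)) -> {within `[a, b], continuous f}%classic.
Proof.
move=> fD; apply/continuous_subspaceT => x.
by apply/differentiable_continuous/derivable1_diffP; have [] := fD x.
Qed.

Lemma ger0_is_derive_le f df a b :
  (forall x, is_derive x (1 : R) f (df x)) ->
  (forall x, a <= x <= b -> 0 <= df x) -> a <= b -> f a <= f b.
Proof.
move=> fD df_ge0 ab.
have [c cab fbfa] := MVT_segment ab (fun x _ => fD x) (is_derive_within_continuous fD).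
by rewrite -subr_ge0 fbfa mulr_ge0 ?subr_ge0 // df_ge0.
Qed.

Lemma ler0_is_derive_ge f df a b :
  (forall x, is_derive x (1 : R) f (df x)) ->
  (forall x, a <= x <= b -> df x <= 0) -> a <= b -> f b <= f a.
Proof.
move=> fD df_le0 ab; rewrite -lerN2.
have fND x : is_derive x (1 : R) (- f) (- df x) by apply: is_deriveN.
apply: (ger0_is_derive_le fND) => // x /df_le0.
by rewrite oppr_ge0.
Qed.

End DeriveMonotone.

Section BernoulliMgf.
Variables (R : realType) (th : R).
Hypotheses (th_ge0 : 0 <= th) (th_le1 : th <= 1).

Let mgf (u : R) : R := 1 - th + th * expR u.
Let psi (u : R) := th * u + u * u / 8 - ln (mgf u).
Let dpsi (u : R) := u / 4 + th - th * expR u / mgf u.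
Let d2psi (u : R) := 4^-1 - th * (1 - th) * expR u / mgf u ^+ 2.

Let mgf_gt0 u : 0 < mgf u.
Proof.
rewrite /mgf; have [->|th_neq0] := eqVneq th 0; first by rewrite subr0 mul0r addr0.
have : 0 < th * expR u by rewrite mulr_gt0 ?expR_gt0 // lt0r th_neq0.
by have := th_le1; lra.
Qed.

Let mgf_derive u : is_derive u (1 : R) mgf (th * expR u).
Proof.
have -> : mgf = cst (1 - th) + th \*: expR by apply/funext.
by apply: is_derive_eq; rewrite /= add0r.
Qed.

Let dpsi_derive u : is_derive u (1 : R) dpsi (d2psi u).
Proof.
have -> : dpsi = 4^-1 \*: id + cst th - (th \*: expR) * (fun v => (mgf v)^-1).
  by apply/funext => v; rewrite /dpsi /= mulrC.
have := is_deriveV (lt0r_neq0 (mgf_gt0 u)) (mgf_derive u).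
move=> mgfV_derive; apply: is_derive_eq.
have := mgf_gt0 u; rewrite /d2psi /mgf /GRing.scale /= => mgf_gt0u.
change (th *: expR u) with (th * expR u).
by field; rewrite gt_eqF.
Qed.

Let psi_derive u : is_derive u (1 : R) psi (dpsi u).
Proof.
have -> : psi = th \*: id + 8^-1 \*: (id * id) - (@ln R \o mgf).
  by apply/funext => v; rewrite /psi /= [_ / 8]mulrC.
have := is_derive1_comp (is_derive1_ln (mgf_gt0 u)) (mgf_derive u).
move=> ln_mgf_derive; apply: is_derive_eq.
have := mgf_gt0 u; rewrite /dpsi /GRing.scale /= => mgf_gt0u.
by field; rewrite gt_eqF.
Qed.

(* [4 th (1 - th) e^u <= mgf u ^+ 2] is AM-GM for the two summands of [mgf u]. *)
Let d2psi_ge0 u : 0 <= d2psi u.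
Proof.
have mgf_gt0u := mgf_gt0 u; have e_gt0 := expR_gt0 u.
rewrite /d2psi subr_ge0 ler_pdivrMr ?exprn_gt0 //.
rewrite /mgf in mgf_gt0u *; set e := expR u in e_gt0 mgf_gt0u *.
have : 0 <= (1 - th - th * e) ^+ 2 by apply: sqr_ge0.
nra.
Qed.

Let dpsi0 : dpsi 0 = 0.
Proof. by rewrite /dpsi /mgf expR0 mulr1 subrK divr1 mul0r add0r subrr. Qed.

Let psi0 : psi 0 = 0.
Proof. by rewrite /psi /mgf expR0 mulr1 subrK ln1 mulr0 !mul0r add0r subr0. Qed.

Let psi_ge0 u : 0 <= psi u.
Proof.
rewrite -psi0; have [u_ge0|u_le0] := leP 0 u.
  apply: (ger0_is_derive_le psi_derive) => // x /andP[x_ge0 _].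
  by rewrite -dpsi0 (ger0_is_derive_le dpsi_derive).
apply: (ler0_is_derive_ge psi_derive) (ltW u_le0) => x /andP[_ x_le0].
by rewrite -dpsi0 (ger0_is_derive_le dpsi_derive).
Qed.

Lemma bernoulli_mgf_le u : 1 - th + th * expR u <= expR (th * u + u ^+ 2 / 8).
Proof.
have := psi_ge0 u; rewrite /psi subr_ge0 -expr2 => ln_mgf_le.
by rewrite -[leLHS](lnK (mgf_gt0 u)) ler_expR.
Qed.

End BernoulliMgf.

Section HoeffdingLemma.
Variable R : realType.

Lemma expR_le_chord (l a b y : R) : a <= y <= b ->
  (b - a) * expR (l * y) <= (b - y) * expR (l * a) + (y - a) * expR (l * b).
Proof.
move=> /andP[ay yb].
have tangent z : expR (l * y) * (1 + l * (z - y)) <= expR (l * z).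
  have -> : l * z = l * y + l * (z - y) by ring.
  by rewrite expRD ler_pM2l ?expR_gt0 ?expR_ge1Dx.
have := tangent a; have := tangent b.
have : 0 <= b - y by rewrite subr_ge0.
have : 0 <= y - a by rewrite subr_ge0.
nra.
Qed.

Lemma two_point_mgf_le (l a b : R) : a <= 0 -> 0 <= b -> a < b ->
  (b * expR (l * a) - a * expR (l * b)) / (b - a) <= expR (l ^+ 2 * (b - a) ^+ 2 / 8).
Proof.
move=> a_le0 b_ge0 ab; have ba_gt0 : 0 < b - a by rewrite subr_gt0.
pose th := - a / (b - a); pose u := l * (b - a).
have th_ge0 : 0 <= th by rewrite /th divr_ge0 ?oppr_ge0 ?(ltW ba_gt0).
have th_le1 : th <= 1 by rewrite /th ler_pdivrMr // mul1r; lra.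
have -> : (b * expR (l * a) - a * expR (l * b)) / (b - a)
    = expR (- (th * u)) * (1 - th + th * expR u).
  have -> : l * b = l * a + u by rewrite /u; ring.
  have -> : - (th * u) = l * a by rewrite /th /u; field; rewrite gt_eqF.
  by rewrite expRD /th; field; rewrite gt_eqF.
apply: le_trans (ler_wpM2l (expR_ge0 _) (bernoulli_mgf_le th_ge0 th_le1 u)) _.
by rewrite -expRD addKr /u exprMn.
Qed.

Variables (T : finType) (w : T -> R).
Hypotheses (w_ge0 : forall t, 0 <= w t) (w_sum1 : \sum_t w t = 1).

Lemma ler_mean (a : R) (Y : T -> R) : (forall t, a <= Y t) -> a <= \sum_t w t * Y t.
Proof.
move=> aY; rewrite -[a]mul1r -w_sum1 mulr_suml.
by apply: ler_sum => t _; rewrite ler_wpM2l.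
Qed.

Lemma mean_ler (b : R) (Y : T -> R) : (forall t, Y t <= b) -> \sum_t w t * Y t <= b.
Proof.
move=> Yb; rewrite -[b]mul1r -w_sum1 mulr_suml.
by apply: ler_sum => t _; rewrite ler_wpM2l.
Qed.

Lemma mean_expR_le_chord (Y : T -> R) (l a b : R) :
  \sum_t w t * Y t = 0 -> (forall t, a <= Y t <= b) ->
  (b - a) * \sum_t w t * expR (l * Y t) <= b * expR (l * a) - a * expR (l * b).
Proof.
move=> mean0 Yab; rewrite mulr_sumr.
pose ea := expR (l * a); pose eb := expR (l * b).
apply: (@le_trans _ _ (\sum_t w t * ((b - Y t) * ea + (Y t - a) * eb))).
  by apply: ler_sum => t _; rewrite mulrCA ler_wpM2l ?expR_le_chord.
rewrite (eq_bigr (fun t => (b * ea - a * eb) * w t + (eb - ea) * (w t * Y t))).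
  by rewrite big_split /= -!mulr_sumr w_sum1 mean0 mulr0 addr0 mulr1.
by move=> t _; ring.
Qed.

Lemma hoeffding_lemma (Y : T -> R) (c l : R) :
  \sum_t w t * Y t = 0 -> (forall s t, Y s - Y t <= c) ->
  \sum_t w t * expR (l * Y t) <= expR (l ^+ 2 * c ^+ 2 / 8).
Proof.
move=> mean0 Yc.
have [t0 _|T0] := pickP (xpredT : pred T); last first.
  by move: w_sum1; rewrite big_pred0 // => /eqP; rewrite eq_sym oner_eq0.
have [tm _ tm_min] := @arg_minP _ R T t0 xpredT Y isT.
pose a := Y tm.
have aY t : a <= Y t by apply: tm_min.
have Yac t : Y t <= a + c by rewrite -lerBlDl Yc.
have a_le0 : a <= 0 by rewrite -mean0 ler_mean.
have ac_ge0 : 0 <= a + c by rewrite -mean0 mean_ler.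
have [c0|c_neq0] := eqVneq c 0.
  have Y0 t : Y t = 0 by have := aY t; have := Yac t; rewrite c0 addr0; lra.
  under eq_bigr do rewrite Y0 mulr0 expR0 mulr1.
  by rewrite w_sum1 c0 expr0n mulr0 mul0r expR0.
have c_gt0 : 0 < c by rewrite lt0r c_neq0 (le_trans _ (Yc t0 t0)) ?subrr.
have a_lt_ac : a < a + c by rewrite ltrDl.
have ac_a : a + c - a = c by rewrite addrC addKr.
have := two_point_mgf_le l a_le0 ac_ge0 a_lt_ac; rewrite ac_a.
apply: le_trans; rewrite ler_pdivlMr // mulrC.
have Yab t : a <= Y t <= a + c by rewrite aY Yac.
by have := mean_expR_le_chord l mean0 Yab; rewrite ac_a.
Qed.

End HoeffdingLemma.

Section CoordinateUpdate.
Variables (M : nat) (T : Type).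
Implicit Types (x : {ffun 'I_M -> T}).

Lemma fupdE x i y j : fupd x i y j = if j == i then y else x j.
Proof. by rewrite ffunE. Qed.

Lemma fupd_same x i y : fupd x i y i = y.
Proof. by rewrite fupdE eqxx. Qed.

Lemma fupd_id x i : fupd x i (x i) = x.
Proof. by apply/ffunP => j; rewrite fupdE; case: eqP => // ->. Qed.

Lemma fupd_fupd x i y z : fupd (fupd x i y) i z = fupd x i z.
Proof. by apply/ffunP => j; rewrite !fupdE; case: eqP. Qed.

Lemma fupdC x i j y z : i != j -> fupd (fupd x i y) j z = fupd (fupd x j z) i y.
Proof.
move=> ij; apply/ffunP => l; rewrite !fupdE.
by case: (eqVneq l j) => [->|//]; rewrite eq_sym (negbTE ij).
Qed.

End CoordinateUpdate.

Section McDiarmid.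
Variables (R : realType) (k M : nat) (w : 'I_k -> R).
Hypotheses (w_ge0 : forall t, 0 <= w t) (w_sum1 : \sum_t w t = 1).
Local Notation X := {ffun 'I_M -> 'I_k}.
Local Notation E := (@iid_expect R M k w).
Implicit Types (f g : X -> R) (x : X).

Lemma iid_weight_ge0 x : 0 <= iid_weight w x.
Proof. exact: prodr_ge0. Qed.

Lemma sum_iid_weight : \sum_(x : X) iid_weight w x = 1.
Proof. by rewrite -(bigA_distr_bigA (fun _ t => w t)) big1. Qed.

Lemma iid_weight_fupd x j y :
  w (x j) * iid_weight w (fupd x j y) = w y * iid_weight w x.
Proof.
rewrite /iid_weight (bigD1 j) //= [in RHS](bigD1 j) //= fupd_same mulrCA; congr (_ * (_ * _)).
by apply: eq_bigr => i ij; rewrite fupdE (negbTE ij).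
Qed.

Lemma iid_expect_cst r : E (fun=> r) = r.
Proof. by rewrite /iid_expect -mulr_suml sum_iid_weight mul1r. Qed.

Lemma iid_expectZ r f : E (fun x => r * f x) = r * E f.
Proof. by rewrite /iid_expect mulr_sumr; apply: eq_bigr => x _; rewrite mulrCA. Qed.

Lemma iid_expectD f g : E (fun x => f x + g x) = E f + E g.
Proof. by rewrite /iid_expect -big_split; apply: eq_bigr => x _; rewrite mulrDr. Qed.

(* [avg_coord j f] is the conditional expectation of [f] given all coordinates
   but the [j]-th one. *)
Definition avg_coord j f x := \sum_y w y * f (fupd x j y).

Lemma iid_expect_avg_coord j f : E (avg_coord j f) = E f.
Proof.
rewrite /iid_expect /avg_coord.
under eq_bigr do rewrite mulr_sumr.
rewrite pair_big /=.
pose swap (p : X * 'I_k) := (fupd p.1 j p.2, p.1 j).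
have swapK : involutive swap by case=> x y; rewrite /swap /= fupd_fupd fupd_id fupd_same.
rewrite (reindex_inj (inv_inj swapK)) /=.
under eq_bigr => p _ do rewrite fupd_fupd fupd_id mulrCA mulrA iid_weight_fupd -mulrA.
rewrite -(pair_big xpredT xpredT (fun x y => w y * (iid_weight w x * f x))) /=.
by apply: eq_bigr => x _; rewrite -mulr_suml w_sum1 mul1r.
Qed.

Lemma bounded_difference_avg_coord j f c :
  bounded_difference f c -> bounded_difference (avg_coord j f) c.
Proof.
move=> f_bd i x y; rewrite /avg_coord -sumrB.
apply: le_trans (ler_norm_sum _ _ _) _.
rewrite -[c i]mul1r -w_sum1 mulr_suml; apply: ler_sum => z _.
rewrite -mulrBr normrM ger0_norm // ler_wpM2l //.
have [<-|ij] := eqVneq i j; last by rewrite fupdC.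
by rewrite fupd_fupd subrr normr0 (le_trans _ (f_bd i x y)).
Qed.

Lemma iid_expect_expR_le_avg_coord j f c l :
  (forall x y, `|f x - f (fupd x j y)| <= c) ->
  E (fun x => expR (l * f x)) <=
  expR (l ^+ 2 * c ^+ 2 / 8) * E (fun x => expR (l * avg_coord j f x)).
Proof.
move=> f_bd; rewrite -(iid_expect_avg_coord j) -iid_expectZ.
apply: ler_sum => x _; rewrite ler_wpM2l ?iid_weight_ge0 // /avg_coord.
set m := \sum_y w y * f (fupd x j y).
have -> : \sum_y w y * expR (l * f (fupd x j y)) =
    expR (l * m) * \sum_y w y * expR (l * (f (fupd x j y) - m)).
  rewrite mulr_sumr; apply: eq_bigr => y _.
  by rewrite mulrCA -expRD mulrBr addrC subrK.
rewrite mulrC ler_wpM2r ?expR_ge0 //.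
apply: hoeffding_lemma => // [|s t].
  by under eq_bigr do rewrite mulrBr; rewrite sumrB -/m -mulr_suml w_sum1 mul1r subrr.
rewrite opprB addrA subrK; apply: le_trans (ler_norm _) _.
by have := f_bd (fupd x j s) t; rewrite fupd_fupd.
Qed.

Definition avg_coords (s : seq 'I_M) f := foldl (fun g j => avg_coord j g) f s.

Lemma iid_expect_avg_coords s f : E (avg_coords s f) = E f.
Proof. by elim: s f => //= j s IHs f; rewrite IHs iid_expect_avg_coord. Qed.

Lemma iid_expect_expR_le_avg_coords s f c l : bounded_difference f c ->
  E (fun x => expR (l * f x)) <=
  expR (l ^+ 2 * (\sum_(j <- s) c j ^+ 2) / 8) * E (fun x => expR (l * avg_coords s f x)).
Proof.
elim: s f => [|j s IHs] f f_bd; first by rewrite big_nil mulr0 mul0r expR0 mul1r.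
apply: le_trans (iid_expect_expR_le_avg_coord l (f_bd j)) _.
have := IHs _ (bounded_difference_avg_coord j f_bd).
move=> /(ler_wpM2l (expR_ge0 (l ^+ 2 * c j ^+ 2 / 8))) /le_trans; apply.
by rewrite big_cons mulrA -expRD -!mulrDl -mulrDr.
Qed.

Definition coord_free j g := forall x y, g (fupd x j y) = g x.

Lemma avg_coord_free j g : coord_free j (avg_coord j g).
Proof. by move=> x y; apply: eq_bigr => z _; rewrite fupd_fupd. Qed.

Lemma coord_free_avg_coord i j g : coord_free i g -> coord_free i (avg_coord j g).
Proof.
have [<- _|ij g_free x y] := eqVneq i j; first exact: avg_coord_free.
by apply: eq_bigr => z _; rewrite fupdC // g_free.
Qed.

Lemma coord_free_avg_coords s j g :
  j \in s \/ coord_free j g -> coord_free j (avg_coords s g).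
Proof.
elim: s g => [g [//|//]|i s IHs g].
rewrite inE => -[/orP[/eqP<-|j_s]|g_free].
- exact: (IHs _ (or_intror (avg_coord_free j g))).
- exact: (IHs _ (or_introl j_s)).
- exact: (IHs _ (or_intror (coord_free_avg_coord i g_free))).
Qed.

Lemma coord_free_const g : (forall j, coord_free j g) -> forall x x', g x = g x'.
Proof.
move=> g_free x x'.
suff g_mix (s : seq 'I_M) : g x = g [ffun j => if j \in s then x' j else x j].
  by rewrite (g_mix (index_enum _)); congr g; apply/ffunP => j; rewrite ffunE mem_index_enum.
elim: s => [|i s IHs]; first by congr g; apply/ffunP => j; rewrite ffunE.
rewrite IHs -(g_free i _ (x' i)); congr g; apply/ffunP => j.
by rewrite fupdE !ffunE inE; case: eqP => [->|].
Qed.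

Lemma avg_all_coords f : avg_coords (index_enum 'I_M) f = fun=> E f.
Proof.
have g_free j : coord_free j (avg_coords (index_enum 'I_M) f).
  by apply: coord_free_avg_coords; left; rewrite mem_index_enum.
apply/funext => x; rewrite -(iid_expect_avg_coords (index_enum _)) -[LHS]iid_expect_cst.
by apply: eq_bigr => x' _; rewrite (coord_free_const g_free x x').
Qed.

Lemma mcdiarmid_mgf f c l : bounded_difference f c ->
  E (fun x => expR (l * (f x - E f))) <= expR (l ^+ 2 * (\sum_j c j ^+ 2) / 8).
Proof.
move=> f_bd.
have -> : (fun x => expR (l * (f x - E f))) = (fun x => expR (- (l * E f)) * expR (l * f x)).
  by apply/funext => x; rewrite -expRD mulrBr addrC.
rewrite iid_expectZ.
apply: le_trans (ler_wpM2l (expR_ge0 _) (iid_expect_expR_le_avg_coords (index_enum _) l f_bd)) _.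
by rewrite avg_all_coords iid_expect_cst mulrCA -expRD addNr expR0 mulr1.
Qed.

Lemma expR_abs_dev_ge1 (l t z : R) : 0 <= l -> t <= `|z| ->
  1 <= expR (- (l * t)) * (expR (l * z) + expR (- l * z)).
Proof.
move=> l_ge0 tz; rewrite mulrDr -!expRD.
have : 1 <= expR (- (l * t) + l * `|z|) by rewrite -expR0 ler_expR addrC subr_ge0 ler_wpM2l.
have [z_ge0|z_lt0] := lerP 0 z; [rewrite ger0_norm // | rewrite ltr0_norm // mulrN -mulNr].
  by move/le_trans; apply; rewrite lerDl expR_ge0.
by move/le_trans; apply; rewrite lerDr expR_ge0.
Qed.

Lemma mcdiarmid f c t l : bounded_difference f c -> 0 <= l ->
  iid_prob w (fun x => t <= `|f x - E f|) <=
  2 * expR (- (l * t) + l ^+ 2 * (\sum_j c j ^+ 2) / 8).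
Proof.
move=> f_bd l_ge0.
have mgf_le := mcdiarmid_mgf l f_bd.
have := mcdiarmid_mgf (- l) f_bd; rewrite sqrrN => mgfN_le.
apply: (@le_trans _ _ (E (fun x =>
    expR (- (l * t)) * (expR (l * (f x - E f)) + expR (- l * (f x - E f)))))).
  rewrite /iid_prob big_mkcond; apply: ler_sum => x _.
  case: ifP => [dev|_]; last by rewrite mulr_ge0 ?iid_weight_ge0 ?mulr_ge0 ?addr_ge0 ?expR_ge0.
  by rewrite -[leLHS]mulr1 ler_wpM2l ?iid_weight_ge0 ?expR_abs_dev_ge1.
rewrite iid_expectZ iid_expectD expRD mulrCA ler_wpM2l ?expR_ge0 //.
by rewrite mulr2n mulrDl mul1r lerD.
Qed.

End McDiarmid.

Lemma sum_natr_eq (R : nzSemiRingType) (T : finType) (a : T) : \sum_t ((a == t)%:R : R) = 1.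
Proof. by rewrite (bigD1 a) //= eqxx big1 ?addr0 // => t /negbTE; rewrite eq_sym => ->. Qed.

Lemma dist_mul1B_le (R : realDomainType) (q q' : R) : 0 <= q <= 1 -> 0 <= q' <= 1 ->
  `|q * (1 - q) - q' * (1 - q')| <= `|q - q'|.
Proof.
move=> /andP[q_ge0 q_le1] /andP[q'_ge0 q'_le1].
have -> : q * (1 - q) - q' * (1 - q') = (q - q') * (1 - q - q') by ring.
by rewrite normrM ler_piMr // ler_norml; apply/andP; split; lra.
Qed.

Section EmpiricalFrequency.
Variables (R : realType) (M k : nat).
Hypothesis M_gt0 : (0 < M)%N.
Local Notation X := {ffun 'I_M -> 'I_k}.
Implicit Types (x : X) (i : 'I_k).

Lemma phatE x i : phat R x i = (\sum_j ((x j == i)%:R : R)) / M%:R.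
Proof.
rewrite /phat -sum1_card natr_sum big_mkcond /=; congr (_ / _).
by apply: eq_bigr => j _; rewrite inE; case: (x j == i).
Qed.

Lemma phat_fupd x j y i :
  phat R x i - phat R (fupd x j y) i = ((x j == i)%:R - (y == i)%:R) / M%:R.
Proof.
rewrite !phatE (bigD1 j) // [in X in _ - X / _](bigD1 j) //= fupd_same -mulrBl.
have -> : \sum_(l | l != j) ((fupd x j y l == i)%:R : R) = \sum_(l | l != j) (x l == i)%:R.
  by apply: eq_bigr => l lj; rewrite fupdE (negbTE lj).
by congr (_ / _); ring.
Qed.

Lemma phat_itv x i : 0 <= phat R x i <= 1.
Proof.
rewrite /phat divr_ge0 //= ler_pdivrMr ?ltr0n // mul1r ler_nat.
by rewrite -[leqRHS]card_ord max_card.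
Qed.

Lemma bounded_difference_Lfun : bounded_difference (@Lfun R M k) (fun=> 2 / M%:R).
Proof.
move=> j x y; rewrite /Lfun -sumrB.
apply: le_trans (ler_norm_sum _ _ _) _.
apply: le_trans (_ : _ <= \sum_i `|phat R x i - phat R (fupd x j y) i|) _.
  by apply: ler_sum => i _; apply: dist_mul1B_le; apply: phat_itv.
have -> : 2 = \sum_i ((x j == i)%:R + (y == i)%:R :> R).
  by rewrite big_split /= !sum_natr_eq.
rewrite mulr_suml; apply: ler_sum => i _.
rewrite phat_fupd normrM normfV normr_nat ler_wpM2r ?invr_ge0 //.
by apply: le_trans (ler_normB _ _) _; rewrite !normr_nat.
Qed.

End EmpiricalFrequency.

Theorem lemma2 (R : realType) (k M : nat) (p : 'I_k -> R) :
  (0 < M)%N -> is_pmf p ->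
  bounded_difference (@Lfun R M k) (fun _ => 2 / M%:R) /\
  (forall t : R, 0 < t ->
     iid_prob p (fun x : {ffun 'I_M -> 'I_k} => t <= `|Lfun R x - iid_expect p (@Lfun R M k)|)
       <= 2 * expR (- (M%:R * t ^+ 2 / 2))).
Proof.
move=> M_gt0 [p_ge0 p_sum1]; have L_bd := @bounded_difference_Lfun R M k M_gt0.
split=> // t t_gt0; have M_pos : (0 : R) < M%:R by rewrite ltr0n.
have tM_ge0 : 0 <= t * M%:R by rewrite mulr_ge0 ?ltW.
apply: le_trans (mcdiarmid p_ge0 p_sum1 t L_bd tM_ge0) _.
rewrite sumr_const card_ord ler_pM2l // ler_expR.
by rewrite le_eqVlt; apply/orP; left; apply/eqP; field; rewrite gt_eqF.
Qed.
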